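(* Let $k\ge1$, $1\le r\le4k^2$, and let $\overline{\mathcal{B}}(2k,2k;r)$ be the set of boards in $\mathcal{B}(2k,2k;r)$ whose board partition $(\lambda_1,\lambda_2,\lambda_3,\lambda_4)$ satisfies: $\lambda_1\ge\lambda_i$ for all $i>1$; $\lambda_2\ge\lambda_4$; if $\lambda_1=\lambda_2$ then $\lambda_3\ge\lambda_4$. For a board partition $\lambda=(\lambda_1,\lambda_2,\lambda_3,\lambda_4)$ of some board in $\overline{\mathcal{B}}(2k,2k;r)$, let $K\le D_4$ be the subgroup of symmetries preserving the set of all boards with board partition $\lambda$. Then: if $\lambda_1=\lambda_2=\lambda_3=\lambda_4$, $K=D_4$ and $[D_4:K]=1$; if $\lambda_1=\lambda_3>\lambda_2=\lambda_4$, $K=\langle D,D'\rangle$ and $[D_4:K]=2$; if $\lambda_1=\lambda_2>\lambda_3=\lambda_4$, $K=\langle V\rangle$ and $[D_4:K]=4$; if $\lambda_1=\lambda_3$ and $\lambda_2\ne\lambda_4$, $K=\langle D'\rangle$ and $[D_4:K]=4$; if $\lambda_2=\lambda_4$ and $\lambda_1\ne\lambda_3$, $K=\langle D\rangle$ and $[D_4:K]=4$; in all other cases $K$ is trivial and $[D_4:K]=8$.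
   Context: A $2k\times2k$ grid with cells $(i,j)$, rows $i$ numbered top to bottom, columns $j$ left to right; $\mathcal{B}(2k,2k;r)$ is the set of boards, i.e. subsets of exactly $r$ blocked cells. $D_4$ is the symmetry group of the square acting on boards: rotations $R_0,R_{90},R_{180},R_{270}$ about the center, $H$ = reflection across the horizontal midline, $V$ = reflection across the vertical midline, $D$ = reflection across the main diagonal from top-left to bottom-right ($(i,j)\mapsto(j,i)$), $D'$ = reflection across the anti-diagonal from bottom-left to top-right ($(i,j)\mapsto(2k+1-j,2k+1-i)$). Quadrants: $Q_1$ = rows $1..k$, cols $1..k$; $Q_2$ = rows $1..k$, cols $k+1..2k$; $Q_3$ = rows $k+1..2k$, cols $k+1..2k$; $Q_4$ = rows $k+1..2k$, cols $1..k$; the board partition is $(\lambda_1,\dots,\lambda_4)$ with $\lambda_i$ the number of blocked cells in $Q_i$. *)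

From HB Require Import structures.
From mathcomp Require Import all_boot all_order all_fingroup.
Set Implicit Arguments. Unset Strict Implicit. Unset Printing Implicit Defensive.

(* Cells of the 2k x 2k grid, 0-indexed: cell (i,j) here is cell (i+1,j+1)
   of the paper.  rev_ord i = 2k-1-i corresponds to i |-> 2k+1-i. *)
Definition cell (k : nat) := ('I_(2 * k) * 'I_(2 * k))%type.

Section Sym.
Variable k : nat.
Local Notation rv := (@rev_ord (2 * k)).

Definition fR0   (c : cell k) : cell k := c.
Definition fR90  (c : cell k) : cell k := (c.2, rv c.1).
Definition fR180 (c : cell k) : cell k := (rv c.1, rv c.2).
Definition fR270 (c : cell k) : cell k := (rv c.2, c.1).
Definition fH    (c : cell k) : cell k := (rv c.1, c.2).
Definition fV    (c : cell k) : cell k := (c.1, rv c.2).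
Definition fD    (c : cell k) : cell k := (c.2, c.1).
Definition fD'   (c : cell k) : cell k := (rv c.2, rv c.1).

Lemma fR90K : cancel fR90 fR270.
Proof. by case=> i j; rewrite /fR90 /fR270 /= rev_ordK. Qed.
Lemma fR270K : cancel fR270 fR90.
Proof. by case=> i j; rewrite /fR90 /fR270 /= rev_ordK. Qed.
Lemma fR180K : involutive fR180.
Proof. by case=> i j; rewrite /fR180 /= !rev_ordK. Qed.
Lemma fHK : involutive fH.
Proof. by case=> i j; rewrite /fH /= !rev_ordK. Qed.
Lemma fVK : involutive fV.
Proof. by case=> i j; rewrite /fV /= !rev_ordK. Qed.
Lemma fDK : involutive fD.
Proof. by case=> i j. Qed.
Lemma fD'K : involutive fD'.
Proof. by case=> i j; rewrite /fD' /= !rev_ordK. Qed.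

Definition pR0   : {perm cell k} := perm (@inj_id (cell k)).
Definition pR90  : {perm cell k} := perm (can_inj fR90K).
Definition pR180 : {perm cell k} := perm (inv_inj fR180K).
Definition pR270 : {perm cell k} := perm (can_inj fR270K).
Definition pH    : {perm cell k} := perm (inv_inj fHK).
Definition pV    : {perm cell k} := perm (inv_inj fVK).
Definition pD    : {perm cell k} := perm (inv_inj fDK).
Definition pD'   : {perm cell k} := perm (inv_inj fD'K).

Definition D4 : {set {perm cell k}} :=
  [set pR0; pR90; pR180; pR270; pH; pV; pD; pD'].

Definition lam1 (B : {set cell k}) := #|[set c in B | (c.1 < k) && (c.2 < k)]|.
Definition lam2 (B : {set cell k}) := #|[set c in B | (c.1 < k) && (k <= c.2)]|.
Definition lam3 (B : {set cell k}) := #|[set c in B | (k <= c.1) && (k <= c.2)]|.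
Definition lam4 (B : {set cell k}) := #|[set c in B | (k <= c.1) && (c.2 < k)]|.

Definition board_partition (B : {set cell k}) : nat * nat * nat * nat :=
  (lam1 B, lam2 B, lam3 B, lam4 B).

Definition boards_with (r : nat) (lam : nat * nat * nat * nat)
  : {set {set cell k}} :=
  [set B : {set cell k} | (#|B| == r) && (board_partition B == lam)].

Definition Kstab (r : nat) (lam : nat * nat * nat * nat) : {set {perm cell k}} :=
  [set g in D4 | (fun X : {set cell k} => g @: X) @: boards_with r lam
                   == boards_with r lam].

Definition in_barB (r : nat) (B : {set cell k}) : bool :=
  [&& #|B| == r,
      lam2 B <= lam1 B, lam3 B <= lam1 B, lam4 B <= lam1 B,
      lam4 B <= lam2 B &
      (lam1 B == lam2 B) ==> (lam4 B <= lam3 B)].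
End Sym.

(* Every symmetry g of the square permutes the four quadrants, so it maps the
   boards with partition lam onto the boards with the correspondingly permuted
   partition.  Hence g stabilises the set of boards with partition lam iff it
   fixes lam, and the stabiliser is read off from the equalities among the
   lam_i; the normalisation defining barB removes the spurious ones (e.g. H
   fixes lam iff lam1 = lam4 and lam2 = lam3, which there forces all four
   equal).  To compute in D4 we identify it with the signed swaps of the two
   coordinates, (transpose?, reverse rows?, reverse columns?) in bool^3, so
   that products, distinctness (for k >= 1) and subgroup membership become
   computations on booleans. *)

From mathcomp Require Import all_boot all_order all_fingroup cyclic zify.

Set Implicit Arguments.
Unset Strict Implicit.
Unset Printing Implicit Defensive.

Lemma card_perm_imset_filter (T : finType) (g : {perm T}) (P Q : pred T) (X : {set T}) :
  (forall x, P (g x) = Q x) -> #|[set y in g @: X | P y]| = #|[set x in X | Q x]|.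
Proof.
move=> PgQ; rewrite -[RHS](card_imset _ (@perm_inj _ g)); apply: eq_card => y.
by rewrite -[y](permKV g) !inE !(mem_imset _ _ (@perm_inj _ g)) inE PgQ.
Qed.

Lemma cycle_involution (gT : finGroupType) (x : gT) :
  x != 1%g -> (x * x = 1)%g -> <[x]>%g = [set 1; x]%g.
Proof.
move=> x_neq1 xx1; apply: cycle2g; apply/eqP; rewrite eqn_leq order_gt1 x_neq1 andbT.
by apply: dvdn_leq => //; rewrite order_dvdn expg2 xx1.
Qed.

Section BoardPartition.
Variable k : nat.
Implicit Type X : {set cell k}.

Lemma rev_ord_lt (i : 'I_(2 * k)) : (rev_ord i < k) = (k <= i).
Proof. by apply/idP/idP => /=; have := ltn_ord i; lia. Qed.

Lemma rev_ord_ge (i : 'I_(2 * k)) : (k <= rev_ord i) = (i < k).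
Proof. by apply/idP/idP => /=; have := ltn_ord i; lia. Qed.

Ltac quadrant_counts :=
  congr (_, _, _, _); apply: card_perm_imset_filter => -[i j];
  by rewrite permE /= ?rev_ord_lt ?rev_ord_ge // andbC.

Lemma board_partition_R0 X : board_partition (pR0 k @: X) = board_partition X.
Proof. quadrant_counts. Qed.
Lemma board_partition_R90 X :
  board_partition (pR90 k @: X) = (lam4 X, lam1 X, lam2 X, lam3 X).
Proof. quadrant_counts. Qed.
Lemma board_partition_R180 X :
  board_partition (pR180 k @: X) = (lam3 X, lam4 X, lam1 X, lam2 X).
Proof. quadrant_counts. Qed.
Lemma board_partition_R270 X :
  board_partition (pR270 k @: X) = (lam2 X, lam3 X, lam4 X, lam1 X).
Proof. quadrant_counts. Qed.
Lemma board_partition_H X :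
  board_partition (pH k @: X) = (lam4 X, lam3 X, lam2 X, lam1 X).
Proof. quadrant_counts. Qed.
Lemma board_partition_V X :
  board_partition (pV k @: X) = (lam2 X, lam1 X, lam4 X, lam3 X).
Proof. quadrant_counts. Qed.
Lemma board_partition_D X :
  board_partition (pD k @: X) = (lam1 X, lam4 X, lam3 X, lam2 X).
Proof. quadrant_counts. Qed.
Lemma board_partition_D' X :
  board_partition (pD' k @: X) = (lam3 X, lam2 X, lam1 X, lam4 X).
Proof. quadrant_counts. Qed.

Lemma D4_ind (P : {perm cell k} -> Prop) :
  P (pR0 k) -> P (pR90 k) -> P (pR180 k) -> P (pR270 k) ->
  P (pH k) -> P (pV k) -> P (pD k) -> P (pD' k) -> {in D4 k, forall g, P g}.
Proof.
move=> *; move=> g; rewrite !inE.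
by do 7!case/orP=> [|/eqP->//]; move/eqP->.
Qed.

Lemma congr_board_partition_D4 g X Y : g \in D4 k ->
  board_partition X = board_partition Y ->
  board_partition (g @: X) = board_partition (g @: Y).
Proof.
move: g; apply: D4_ind;
  rewrite ?board_partition_R0 ?board_partition_R90 ?board_partition_R180
    ?board_partition_R270 ?board_partition_H ?board_partition_V
    ?board_partition_D ?board_partition_D' //;
  by case=> -> -> -> ->.
Qed.

Lemma KstabE r (B : {set cell k}) : #|B| = r ->
  Kstab k r (board_partition B) =
  [set g in D4 k | board_partition (g @: B) == board_partition B].
Proof.
move=> cardB; apply: eq_finset => g; case D4g: (g \in D4 k) => //=.
have in_boards X : X \in boards_with k r (board_partition B) =
    (#|X| == r) && (board_partition X == board_partition B) by rewrite inE.
apply/eqP/eqP => [stab | gB].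
  have : g @: B \in boards_with k r (board_partition B).
    by rewrite -stab imset_f // in_boards cardB !eqxx.
  by rewrite in_boards => /andP[_ /eqP].
apply/eqP; rewrite eqEcard card_imset ?leqnn ?andbT; last exact/imset_inj/perm_inj.
apply/subsetP => _ /imsetP[X + ->]; rewrite !in_boards => /andP[/eqP cardX /eqP bpX].
rewrite card_imset; last exact: perm_inj.
by rewrite cardX (congr_board_partition_D4 D4g bpX) gB !eqxx.
Qed.

End BoardPartition.

Section SignedSwaps.
Variable k : nat.

Definition rev_if (b : bool) (i : 'I_(2 * k)) := if b then rev_ord i else i.

Lemma rev_ifK b : involutive (rev_if b).
Proof. by case: b => i //=; rewrite rev_ordK. Qed.

Lemma rev_if_addb a b i : rev_if a (rev_if b i) = rev_if (a (+) b) i.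
Proof. by case: a b => -[] //=; rewrite rev_ordK. Qed.

Definition d4map (s : bool * bool * bool) (c : cell k) : cell k :=
  let: (u, a, b) := s in
  let: (i, j) := if u then (c.2, c.1) else c in (rev_if a i, rev_if b j).

Lemma d4map_inj s : injective (d4map s).
Proof.
case: s => [[[] a] b] [i j] [i' j'] /=;
  by case=> /(inv_inj (rev_ifK _)) -> /(inv_inj (rev_ifK _)) ->.
Qed.

Definition d4perm s : {perm cell k} := perm (@d4map_inj s).

(* In a product s t, s acts first; if t transposes, the two reversal flags of s
   trade places before being combined with those of t. *)
Definition d4mul (s t : bool * bool * bool) : bool * bool * bool :=
  let: (u, a, b) := s in let: (u', a', b') := t in
  (u (+) u', a' (+) (if u' then b else a), b' (+) (if u' then a else b)).

Lemma d4perm_mul s t : (d4perm s * d4perm t)%g = d4perm (d4mul s t).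
Proof.
apply/permP => -[i j]; rewrite permM !permE.
by case: s t => [[[] a] b] [[[] a'] b'] /=; rewrite !rev_if_addb.
Qed.

Lemma d4perm0 : d4perm (false, false, false) = 1%g.
Proof. by apply/permP => -[i j]; rewrite !permE. Qed.

Lemma pR0_d4perm : pR0 k = d4perm (false, false, false).
Proof. by apply/permP => -[i j]; rewrite !permE. Qed.
Lemma pR90_d4perm : pR90 k = d4perm (true, false, true).
Proof. by apply/permP => -[i j]; rewrite !permE. Qed.
Lemma pR180_d4perm : pR180 k = d4perm (false, true, true).
Proof. by apply/permP => -[i j]; rewrite !permE. Qed.
Lemma pR270_d4perm : pR270 k = d4perm (true, true, false).
Proof. by apply/permP => -[i j]; rewrite !permE. Qed.
Lemma pH_d4perm : pH k = d4perm (false, true, false).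
Proof. by apply/permP => -[i j]; rewrite !permE. Qed.
Lemma pV_d4perm : pV k = d4perm (false, false, true).
Proof. by apply/permP => -[i j]; rewrite !permE. Qed.
Lemma pD_d4perm : pD k = d4perm (true, false, false).
Proof. by apply/permP => -[i j]; rewrite !permE. Qed.
Lemma pD'_d4perm : pD' k = d4perm (true, true, true).
Proof. by apply/permP => -[i j]; rewrite !permE. Qed.

Definition d4permE := (pR0_d4perm, pR90_d4perm, pR180_d4perm, pR270_d4perm,
                       pH_d4perm, pV_d4perm, pD_d4perm, pD'_d4perm).

Lemma D4_d4perm : D4 k = d4perm @: setT.
Proof.
apply/setP => g; apply/idP/imsetP => [|[s _ ->]].
  by move: g; apply: D4_ind; rewrite !d4permE; eexists.
by rewrite /D4 !d4permE !inE; case: s => -[[] []] []; rewrite eqxx ?orbT.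
Qed.

Lemma group_set_d4perm (S : {set bool * bool * bool}) :
  (false, false, false) \in S -> {in S &, forall s t, d4mul s t \in S} ->
  group_set (d4perm @: S).
Proof.
move=> S1 mulS; apply/group_setP; split=> [|_ _ /imsetP[s Ss ->] /imsetP[t St ->]].
  by rewrite -d4perm0 imset_f.
by rewrite d4perm_mul imset_f // mulS.
Qed.

Lemma D4_group_set : group_set (D4 k).
Proof. by rewrite D4_d4perm; apply: group_set_d4perm => [|s t _ _]; rewrite inE. Qed.

Canonical D4_group := Group D4_group_set.

Hypothesis k_gt0 : 0 < k.

Let o0 : 'I_(2 * k) := Ordinal (ltac:(lia) : 0 < 2 * k).
Let o1 : 'I_(2 * k) := Ordinal (ltac:(lia) : 1 < 2 * k).

Lemma d4perm_inj : injective d4perm.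
Proof.
move=> [[u a] b] [[u' a'] b'] e.
have e00 := congr1 (fun g : {perm _} => g (o0, o0)) e.
have e01 := congr1 (fun g : {perm _} => g (o0, o1)) e.
rewrite !permE in e00 e01.
have rev_if_o0 c c' : rev_if c o0 = rev_if c' o0 -> c = c'.
  by case: c c' => -[] // /(congr1 val) /=; lia.
have rev_if_o0_o1 c : (rev_if c o0 == rev_if c o1) = false.
  by rewrite (inj_eq (inv_inj (rev_ifK c))).
clear e; move: e00 e01; case: u u' => -[] /= [/rev_if_o0 <- /rev_if_o0 <-] //.
  by case=> /eqP; rewrite eq_sym rev_if_o0_o1.
by case=> /eqP; rewrite rev_if_o0_o1.
Qed.

Lemma card_D4 : #|D4 k| = 8.
Proof. by rewrite D4_d4perm card_imset ?cardsT ?card_prod ?card_bool //; apply: d4perm_inj. Qed.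

Lemma index_D4 (H : {group {perm cell k}}) : H \subset D4 k -> #|D4 k : H|%g = 8 %/ #|H|.
Proof. by move/Lagrange; rewrite card_D4 => <-; rewrite mulKn. Qed.

Lemma cycle_d4perm s : s != (false, false, false) -> d4mul s s = (false, false, false) ->
  <[d4perm s]>%g = d4perm @: [set (false, false, false); s].
Proof.
move=> s_neq0 ss0; rewrite cycle_involution ?d4perm_mul ?ss0 ?d4perm0 //.
  by rewrite imsetU1 imset_set1 d4perm0.
by rewrite -d4perm0 (inj_eq d4perm_inj).
Qed.

Lemma index_D4_cycle s : s != (false, false, false) ->
  d4mul s s = (false, false, false) -> #|D4 k : <[d4perm s]>|%g = 4.
Proof.
move=> s_neq0 ss0.
have sub_D4 : <[d4perm s]>%g \subset D4 k by rewrite cycle_subG /= D4_d4perm imset_f.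
rewrite index_D4 //= cycle_d4perm // card_imset; last exact: d4perm_inj.
by rewrite cards2 eq_sym s_neq0.
Qed.

Lemma gen_pD_pD' : <<[set pD k; pD' k]>>%g = d4perm @: [set s | s.1.2 == s.2].
Proof.
have gK : group_set (d4perm @: [set s | s.1.2 == s.2]).
  apply: group_set_d4perm; rewrite ?inE // => -[[u a] b] [[u' a'] b'].
  by rewrite !inE /= => /eqP-> /eqP->; case: u'.
apply/eqP; rewrite eqEsubset (gen_subG _ (Group gK)) /= subUset !sub1set !d4permE.
rewrite !imset_f ?inE //=; apply/subsetP => _ /imsetP[[[u a] b] + ->].
rewrite inE /= => /eqP <-; case: u; case: a; rewrite ?d4perm0 ?group1 //.
- by rewrite mem_gen // !inE eqxx orbT.
- by rewrite mem_gen // !inE eqxx.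
have -> : (false, true, true) = d4mul (true, false, false) (true, true, true) by [].
by rewrite -d4perm_mul groupM ?mem_gen // !inE eqxx ?orbT.
Qed.

Lemma index_D4_gen_pD_pD' : #|D4 k : <<[set pD k; pD' k]>>|%g = 2.
Proof.
have sub_D4 : <<[set pD k; pD' k]>>%g \subset D4 k.
  by rewrite gen_subG subUset !sub1set !inE !eqxx ?orbT.
rewrite index_D4 //= gen_pD_pD' // card_imset; last exact: d4perm_inj.
have -> : [set s : bool * bool * bool | s.1.2 == s.2] =
    [set (false, false, false); (true, false, false); (true, true, true); (false, true, true)].
  by apply/setP => -[[[] []] []]; rewrite !inE.
by rewrite -!setUA !cardsU1 cards1 !inE.
Qed.

Lemma Kstab_d4perm r (B : {set cell k}) (S : {set bool * bool * bool}) : #|B| = r ->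
  {in D4 k, forall g : {perm cell k},
    (board_partition (g @: B) == board_partition B) = (g \in d4perm @: S)} ->
  Kstab k r (board_partition B) = d4perm @: S.
Proof.
move=> cardB fixS; rewrite KstabE //; apply/setP => g; rewrite inE.
case: (boolP (g \in D4 k)) => [/fixS // | g_notin_D4].
apply/esym/negbTE; apply: contra g_notin_D4; apply: subsetP.
by rewrite D4_d4perm imsetS ?subsetT.
Qed.

End SignedSwaps.

Ltac decide_Kstab :=
  apply: Kstab_d4perm => //; apply: D4_ind;
  rewrite ?board_partition_R0 ?board_partition_R90 ?board_partition_R180
    ?board_partition_R270 ?board_partition_H ?board_partition_V
    ?board_partition_D ?board_partition_D' /board_partition !d4permE
    ?(mem_imset _ _ (d4perm_inj _)) // !inE ?xpair_eqE /=; lia.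

Theorem corollary4p2 (k r : nat) (B : {set cell k}) :
  1 <= k -> 1 <= r <= 4 * k ^ 2 -> in_barB r B ->
  let l1 := lam1 B in let l2 := lam2 B in let l3 := lam3 B in let l4 := lam4 B in
  let K := Kstab k r (board_partition B) in
  ((l1 = l2 /\ l2 = l3 /\ l3 = l4) ->
        K = D4 k /\ #|D4 k : K|%g = 1) /\
  (      (l1 = l3 /\ l3 > l2 /\ l2 = l4) ->
        K = <<[set pD k; pD' k]>>%g /\ #|D4 k : K|%g = 2) /\
  (      (l1 = l2 /\ l2 > l3 /\ l3 = l4) ->
        K = <[pV k]>%g /\ #|D4 k : K|%g = 4) /\
  (      (l1 = l3 /\ l2 <> l4) ->
        K = <[pD' k]>%g /\ #|D4 k : K|%g = 4) /\
  (      (l2 = l4 /\ l1 <> l3) ->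
        K = <[pD k]>%g /\ #|D4 k : K|%g = 4) /\
  (      (~ (l1 = l2 /\ l2 = l3 /\ l3 = l4) /\
       ~ (l1 = l3 /\ l3 > l2 /\ l2 = l4) /\
       ~ (l1 = l2 /\ l2 > l3 /\ l3 = l4) /\
       ~ (l1 = l3 /\ l2 <> l4) /\
       ~ (l2 = l4 /\ l1 <> l3)) ->
        K = 1%g /\ #|D4 k : K|%g = 8).
Proof.
move=> k_gt0 _ /and5P[/eqP cardB le21 le31 le41 /andP[le42 /implyP le43]] /=.
have {}le43 : lam1 B <= lam2 B -> lam4 B <= lam3 B.
  by move=> le12; apply: le43; rewrite eqn_leq le12.
split.
  move=> eqs; suff -> : Kstab k r (board_partition B) = D4 k by rewrite indexgg.
  rewrite D4_d4perm; decide_Kstab.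
split.
  move=> eqs; suff KE : Kstab k r (board_partition B) = <<[set pD k; pD' k]>>%g.
    by rewrite KE index_D4_gen_pD_pD'.
  rewrite gen_pD_pD' //; decide_Kstab.
split.
  move=> eqs; suff KE : Kstab k r (board_partition B) = <[pV k]>%g.
    by rewrite KE pV_d4perm index_D4_cycle.
  rewrite pV_d4perm cycle_d4perm //; decide_Kstab.
split.
  move=> eqs; suff KE : Kstab k r (board_partition B) = <[pD' k]>%g.
    by rewrite KE pD'_d4perm index_D4_cycle.
  rewrite pD'_d4perm cycle_d4perm //; decide_Kstab.
split.
  move=> eqs; suff KE : Kstab k r (board_partition B) = <[pD k]>%g.
    by rewrite KE pD_d4perm index_D4_cycle.
  rewrite pD_d4perm cycle_d4perm //; decide_Kstab.
move=> neqs; suff KE : Kstab k r (board_partition B) = 1%g.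
  by rewrite KE indexg1 card_D4.
rewrite set1gE -d4perm0 -imset_set1; decide_Kstab.
Qed.
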